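(* (1) If $T\to A\overset{f}{\to}B\to T[1]$ is a distinguished triangle in $\mathscr{C}$ with $T\in\mathcal{T}$, then $B\in\mathscr{C}^+$ implies $A\in\mathscr{C}^+$. (2) If $V\to A\overset{f}{\to}B\to V[1]$ is a distinguished triangle in $\mathscr{C}$ with $V\in\mathcal{V}$, then $A\in\mathscr{C}^+$ implies $B\in\mathscr{C}^+$.
   Context: $\mathscr{C}$ is a triangulated category with shift $[1]$; subcategories are full, additive, closed under isomorphisms and direct summands. $\mathrm{Ext}^1(X,Y)=\mathscr{C}(X,Y[1])$. $\mathcal{M}\ast\mathcal{N}$ is the full subcategory of objects $C$ admitting a distinguished triangle $M\to C\to N\to M[1]$ with $M\in\mathcal{M}$, $N\in\mathcal{N}$. A cotorsion pair $(\mathcal{U},\mathcal{V})$: $\mathrm{Ext}^1(\mathcal{U},\mathcal{V})=0$ and $\mathscr{C}=\mathcal{U}\ast\mathcal{V}[1]$. Fix a twin cotorsion pair, i.e. cotorsion pairs $(\mathcal{S},\mathcal{T}),(\mathcal{U},\mathcal{V})$ with $\mathrm{Ext}^1(\mathcal{S},\mathcal{V})=0$. Put $\mathcal{W}=\mathcal{T}\cap\mathcal{U}$ and $\mathscr{C}^+=\mathcal{W}\ast\mathcal{V}[1]$. *)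

From HB Require Import structures.
From mathcomp Require Import all_boot all_algebra.
Set Implicit Arguments. Unset Strict Implicit. Unset Printing Implicit Defensive.
Import GRing.Theory.
Local Open Scope ring_scope.

Record Preadd := {
  Obj :> Type;
  Mor : Obj -> Obj -> zmodType;
  idm : forall X, Mor X X;
  comp : forall X Y Z, Mor Y Z -> Mor X Y -> Mor X Z;
  compA : forall X Y Z W (h : Mor Z W) (g : Mor Y Z) (f : Mor X Y),
      comp h (comp g f) = comp (comp h g) f;
  comp1m : forall X Y (f : Mor X Y), comp (idm Y) f = f;
  compm1 : forall X Y (f : Mor X Y), comp f (idm X) = f;
  compDl : forall X Y Z (g1 g2 : Mor Y Z) (f : Mor X Y),
      comp (g1 + g2) f = comp g1 f + comp g2 f;
  compDr : forall X Y Z (g : Mor Y Z) (f1 f2 : Mor X Y),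
      comp g (f1 + f2) = comp g f1 + comp g f2
}.
Arguments idm {p} X.
Arguments comp {p X Y Z} _ _.
Notation "g <o f" := (comp g f) (at level 40, left associativity).

Section PreaddDefs.
Variable C : Preadd.

Definition is_iso (X Y : C) (f : Mor X Y) : Prop :=
  exists g : Mor Y X, g <o f = idm X /\ f <o g = idm Y.

Definition iso (X Y : C) : Prop := exists f : Mor X Y, is_iso f.

Definition is_zero (Z : C) : Prop :=
  (forall X (f : Mor Z X), f = 0) /\ (forall X (f : Mor X Z), f = 0).

Definition is_biprod (X Y S : C) : Prop :=
  exists (i1 : Mor X S) (i2 : Mor Y S) (p1 : Mor S X) (p2 : Mor S Y),
    [/\ p1 <o i1 = idm X, p2 <o i2 = idm Y, p1 <o i2 = 0, p2 <o i1 = 0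
      & i1 <o p1 + i2 <o p2 = idm S].

(** A (full) subcategory given by a predicate on objects which is additive,
    closed under isomorphisms and under direct summands. *)
Definition subcat (P : C -> Prop) : Prop :=
  [/\ (forall X Y, iso X Y -> P X -> P Y),
      (forall Z, is_zero Z -> P Z),
      (forall X Y S, is_biprod X Y S -> P X -> P Y -> P S)
    & (forall X Y S, is_biprod X Y S -> P S -> P X)].
End PreaddDefs.

Record Triang := {
  pre :> Preadd;
  zero_ex : exists Z : pre, is_zero Z;
  biprod_ex : forall X Y : pre, exists S, is_biprod X Y S;
  (* shift functor [1], an additive auto-equivalence *)
  sh : pre -> pre;
  shm : forall X Y : pre, Mor X Y -> Mor (sh X) (sh Y);
  shm_id : forall X, shm (idm X) = idm (sh X);
  shm_comp : forall X Y Z (g : Mor Y Z) (f : Mor X Y),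
      shm (g <o f) = shm g <o shm f;
  shm_add : forall X Y (f g : Mor X Y), shm (f + g) = shm f + shm g;
  shm_inj : forall X Y (f g : Mor X Y), shm f = shm g -> f = g;
  shm_surj : forall X Y (h : Mor (sh X) (sh Y)), exists f, shm f = h;
  sh_esurj : forall X, exists Y, iso (sh Y) X;
  dist : forall X Y Z : pre, Mor X Y -> Mor Y Z -> Mor Z (sh X) -> Prop;
  dist_iso : forall X Y Z X' Y' Z' (u : Mor X Y) (v : Mor Y Z) (w : Mor Z (sh X))
      (u' : Mor X' Y') (v' : Mor Y' Z') (w' : Mor Z' (sh X'))
      (a : Mor X X') (b : Mor Y Y') (c : Mor Z Z'),
      is_iso a -> is_iso b -> is_iso c ->
      b <o u = u' <o a -> c <o v = v' <o b -> shm a <o w = w' <o c ->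
      dist u v w -> dist u' v' w';
  dist_id : forall X Z, is_zero Z -> dist (idm X) (0 : Mor X Z) (0 : Mor Z (sh X));
  dist_ex : forall X Y (u : Mor X Y), exists Z (v : Mor Y Z) (w : Mor Z (sh X)), dist u v w;
  dist_rot : forall X Y Z (u : Mor X Y) (v : Mor Y Z) (w : Mor Z (sh X)),
      dist u v w <-> dist v w (- shm u);
  dist_morph : forall X Y Z X' Y' Z' (u : Mor X Y) (v : Mor Y Z) (w : Mor Z (sh X))
      (u' : Mor X' Y') (v' : Mor Y' Z') (w' : Mor Z' (sh X'))
      (a : Mor X X') (b : Mor Y Y'),
      dist u v w -> dist u' v' w' -> b <o u = u' <o a ->
      exists c : Mor Z Z', c <o v = v' <o b /\ shm a <o w = w' <o c;
  dist_oct : forall X Y Z Z' X' Y'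
      (u : Mor X Y) (j : Mor Y Z') (k : Mor Z' (sh X))
      (v : Mor Y Z) (l : Mor Z X') (i : Mor X' (sh Y))
      (m : Mor Z Y') (n : Mor Y' (sh X)),
      dist u j k -> dist v l i -> dist (v <o u) m n ->
      exists (f : Mor Z' Y') (g : Mor Y' X'),
        [/\ dist f g (shm j <o i), f <o j = m <o v, n <o f = k,
            g <o m = l & shm u <o n = i <o g]
}.
Arguments sh {t} X.
Arguments shm {t X Y} f.
Arguments dist {t X Y Z} u v w.

Section TriangDefs.
Variable C : Triang.

(** Ext^1(X,Y) = C(X, Y[1]) vanishes. *)
Definition Ext1_zero (X Y : C) : Prop := forall f : Mor X (sh Y), f = 0.

Definition Ext1_zero_sub (M N : C -> Prop) : Prop :=
  forall X Y, M X -> N Y -> Ext1_zero X Y.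

Definition shift_sub (N : C -> Prop) : C -> Prop :=
  fun A => exists X, N X /\ iso A (sh X).

Definition star (M N : C -> Prop) : C -> Prop :=
  fun A => exists (X Z : C) (u : Mor X A) (v : Mor A Z) (w : Mor Z (sh X)),
    M X /\ N Z /\ dist u v w.

Definition cotorsion_pair (U V : C -> Prop) : Prop :=
  subcat U /\ subcat V /\ Ext1_zero_sub U V /\
  (forall A : C, star U (shift_sub V) A).

Definition twin_cotorsion_pair (S T U V : C -> Prop) : Prop :=
  cotorsion_pair S T /\ cotorsion_pair U V /\ Ext1_zero_sub S V.

Definition Wcore (T U : C -> Prop) : C -> Prop := fun A => T A /\ U A.

Definition Cplus (T U V : C -> Prop) : C -> Prop :=
  star (Wcore T U) (shift_sub V).
End TriangDefs.

(* The right half Y of a cotorsion pair (X, Y) is the Ext-orthogonal of X, so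
   Y[1] is closed under extensions; by the octahedral axiom the cone of a
   composite v u is then an extension of the cones of u and v, hence lies in
   Y[1] whenever they do.  Moreover V is contained in T, being Ext-orthogonal
   to S.

   (1) If W1 -> B -b-> Y1 exhibits B in C^+, the cone of b f is an extension of
   the cones of f and b, which lie in T[1]; so the cocone A' of b f lies in T.
   Decomposing A' along (U, V) as U' -> A' -> Q' with Q' in V[1], the object U'
   is the cocone of A' -> Q' between objects of T, hence lies in T and thus in
   W; the composite U' -> A' -> A has cone in V[1] as an extension of Q' and Y1.
   (2) The composite W1 -> A -f-> B has cone in V[1] as an extension of Y1 and
   V[1]. *)
From Pilot Require Import Defs.
From mathcomp Require Import all_boot all_algebra.
Set Implicit Arguments. Unset Strict Implicit. Unset Printing Implicit Defensive.
Import GRing.Theory.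
Local Open Scope ring_scope.

Section PreaddLemmas.
Variable C : Preadd.

Lemma comp0m (X Y Z : C) (f : Mor X Y) : (0 : Mor Y Z) <o f = 0.
Proof. by apply: (addrI (0 <o f)); rewrite -compDl !addr0. Qed.

Lemma compm0 (X Y Z : C) (g : Mor Y Z) : g <o (0 : Mor X Y) = 0.
Proof. by apply: (addrI (g <o 0)); rewrite -compDr !addr0. Qed.

Lemma compNl (X Y Z : C) (g : Mor Y Z) (f : Mor X Y) : (- g) <o f = - (g <o f).
Proof. by apply/eqP; rewrite -addr_eq0 -compDl addNr comp0m. Qed.

Lemma compNr (X Y Z : C) (g : Mor Y Z) (f : Mor X Y) : g <o (- f) = - (g <o f).
Proof. by apply/eqP; rewrite -addr_eq0 -compDr addNr compm0. Qed.

Lemma compBl (X Y Z : C) (g1 g2 : Mor Y Z) (f : Mor X Y) :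
  (g1 - g2) <o f = g1 <o f - g2 <o f.
Proof. by rewrite compDl compNl. Qed.

Lemma compBr (X Y Z : C) (g : Mor Y Z) (f1 f2 : Mor X Y) :
  g <o (f1 - f2) = g <o f1 - g <o f2.
Proof. by rewrite compDr compNr. Qed.

Lemma is_iso_id (X : C) : is_iso (idm X).
Proof. by exists (idm X); rewrite comp1m. Qed.

Lemma iso_refl (X : C) : iso X X.
Proof. by exists (idm X); apply: is_iso_id. Qed.

Lemma iso_sym (X Y : C) : iso X Y -> iso Y X.
Proof. by case=> f [g [H1 H2]]; exists g, f. Qed.

Lemma biprod_iso (X Y S X' Y' S' : C) :
  is_biprod X Y S -> iso X X' -> iso Y Y' -> iso S S' -> is_biprod X' Y' S'.
Proof.
case=> i1 [i2 [p1 [p2 [H11 H22 H12 H21 Hs]]]].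
case=> a [a' [Ha1 Ha2]] [b [b' [Hb1 Hb2]]] [s [s' [Hs1 Hs2]]].
exists (s <o (i1 <o a')), (s <o (i2 <o b')), (a <o (p1 <o s')), (b <o (p2 <o s')).
split; rewrite !Defs.compA.
- by rewrite -(Defs.compA _ s' s) Hs1 compm1 -(Defs.compA _ p1 i1) H11 compm1.
- by rewrite -(Defs.compA _ s' s) Hs1 compm1 -(Defs.compA _ p2 i2) H22 compm1.
- by rewrite -(Defs.compA _ s' s) Hs1 compm1 -(Defs.compA _ p1 i2) H12 compm0 comp0m.
- by rewrite -(Defs.compA _ s' s) Hs1 compm1 -(Defs.compA _ p2 i1) H21 compm0 comp0m.
- rewrite -(Defs.compA _ a' a) Ha1 compm1 -(Defs.compA _ b' b) Hb1 compm1.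
  by rewrite -(Defs.compA s i1 p1) -(Defs.compA s i2 p2) -compDl -compDr Hs compm1.
Qed.

End PreaddLemmas.

Section TriangLemmas.
Variable C : Triang.

Lemma shm0 (X Y : C) : shm (0 : Mor X Y) = 0.
Proof. by apply: (addrI (shm (0 : Mor X Y))); rewrite -shm_add !addr0. Qed.

Lemma shmN (X Y : C) (f : Mor X Y) : shm (- f) = - shm f.
Proof. by apply/eqP; rewrite -addr_eq0 addrC -shm_add subrr shm0. Qed.

Lemma iso_unshift (A B : C) : iso (sh A) (sh B) -> iso A B.
Proof.
case=> f [g [H1 H2]].
have [f0 Hf] := shm_surj f; have [g0 Hg] := shm_surj g.
by exists f0, g0; split; apply: shm_inj; rewrite shm_comp Hf Hg shm_id.
Qed.

Lemma biprod_unshift (A B D : C) : is_biprod (sh A) (sh B) (sh D) -> is_biprod A B D.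
Proof.
case=> i1 [i2 [p1 [p2 [H11 H22 H12 H21 Hs]]]].
have [j1 E1] := shm_surj i1; have [j2 E2] := shm_surj i2.
have [q1 F1] := shm_surj p1; have [q2 F2] := shm_surj p2.
exists j1, j2, q1, q2; split; apply: shm_inj;
  by rewrite ?shm_add !shm_comp ?E1 ?E2 ?F1 ?F2 ?shm_id ?shm0.
Qed.

Lemma dist_rotate (X Y Z : C) (u : Mor X Y) (v : Mor Y Z) (w : Mor Z (sh X)) :
  dist u v w -> dist v w (- shm u).
Proof. exact: (dist_rot u v w).1. Qed.

Lemma dist_comp0 (X Y Z : C) (u : Mor X Y) (v : Mor Y Z) (w : Mor Z (sh X)) :
  dist u v w -> v <o u = 0.
Proof.
move=> Hd; have [Z0 HZ0] := zero_ex C.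
have [c [Hc _]] := dist_morph (a := idm X) (b := u) (dist_id X HZ0) Hd erefl.
by rewrite -Hc compm0.
Qed.

(* Comparison of the rotated triangle [P -> 0 -> P[1]] with the rotation of
   [u, v, w] yields the factorization through [u]. *)
Lemma dist_factor (X Y Z P : C) (u : Mor X Y) (v : Mor Y Z) (w : Mor Z (sh X))
  (f : Mor P Y) : dist u v w -> v <o f = 0 -> exists g : Mor P X, u <o g = f.
Proof.
move=> Hd Hvf; have [Z0 HZ0] := zero_ex C.
have H0 := dist_rotate (dist_id P HZ0).
have E : (0 : Mor Z0 Z) <o 0 = v <o f by rewrite comp0m Hvf.
have [c [_ Hc]] := dist_morph H0 (dist_rotate Hd) E.
have [g Hg] := shm_surj c.
exists g; apply: shm_inj.
move: Hc; rewrite shm_id compNr compm1 compNl -Hg -shm_comp.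
by move/eqP; rewrite eqr_opp => /eqP.
Qed.

Lemma dist_split (X Y Z : C) (u : Mor X Y) (v : Mor Y Z) (w : Mor Z (sh X)) :
  dist u v w -> w = 0 -> is_biprod X Z Y.
Proof.
move=> Hd Hw.
have Hd1 := dist_rotate Hd.
have Hd2 := dist_rotate Hd1.
have [s Hs] : exists s : Mor Z Y, v <o s = idm Z.
  by apply: dist_factor Hd1 _; rewrite Hw comp0m.
have Hvu := dist_comp0 Hd.
have u_mono : forall P (g : Mor P X), u <o g = 0 -> g = 0.
  move=> P g Hg.
  have E : (- shm u) <o shm g = 0 by rewrite compNl -shm_comp Hg shm0 oppr0.
  have [h Hh] := dist_factor Hd2 E.
  by apply: shm_inj; rewrite shm0 -Hh Hw comp0m.
have [r Hr] : exists r : Mor Y X, u <o r = idm Y - s <o v.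
  by apply: dist_factor Hd _; rewrite compBr compm1 Defs.compA Hs comp1m subrr.
exists u, s, r, v; split => //.
- apply/eqP; rewrite -subr_eq0; apply/eqP/u_mono.
  by rewrite compBr Defs.compA Hr compBl comp1m -Defs.compA Hvu compm0 subr0 compm1 subrr.
- apply/u_mono.
  by rewrite Defs.compA Hr compBl comp1m -Defs.compA Hs compm1 subrr.
- by rewrite Hr subrK.
Qed.

Lemma dist_ex_cocone (Y Z : C) (v : Mor Y Z) :
  exists X (u : Mor X Y) (w : Mor Z (sh X)), dist u v w.
Proof.
have [D [w' [x' Hd]]] := dist_ex v.
have [X [e [e' [H1 H2]]]] := sh_esurj D.
have Hd2 : dist v (e' <o w') (x' <o e).
  apply: (dist_iso (is_iso_id Y) (is_iso_id Z) (_ : is_iso e') _ _ _ Hd).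
  - by exists e.
  - by rewrite comp1m compm1.
  - by rewrite compm1.
  - by rewrite shm_id comp1m -Defs.compA H2 compm1.
have [u0 Hu0] := shm_surj (x' <o e).
exists X, (- u0), (e' <o w'); apply/dist_rot.
by rewrite shmN opprK Hu0.
Qed.

Lemma shift_sub_sh (P : C -> Prop) (M : C) : P M -> shift_sub P (sh M).
Proof. by exists M; split => //; apply: iso_refl. Qed.

Lemma shift_sub_shK (P : C -> Prop) (M : C) :
  subcat P -> shift_sub P (sh M) -> P M.
Proof.
case=> Hiso _ _ _ [M' [HM' Hi]].
exact: Hiso (iso_sym (iso_unshift Hi)) HM'.
Qed.

Lemma shift_sub_summand (P : C -> Prop) (X Y S : C) :
  subcat P -> is_biprod X Y S -> shift_sub P S -> shift_sub P X.
Proof.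
case=> _ _ _ Hsum Hb [P0 [HP0 HS]].
have [X1 HX] := sh_esurj X; have [Y1 HY] := sh_esurj Y.
have Hb1 := biprod_unshift (biprod_iso Hb (iso_sym HX) (iso_sym HY) HS).
by exists X1; split; [exact: Hsum Hb1 HP0 | exact: iso_sym].
Qed.

Section CotorsionPair.
Variables X Y : C -> Prop.
Hypothesis XY : cotorsion_pair X Y.

Lemma orth_shift_sub (X0 N : C) :
  X X0 -> shift_sub Y N -> forall t : Mor X0 N, t = 0.
Proof.
case: XY => _ [_ [He _]] HX [Y0 [HY0 [e [e' [H1 H2]]]]] t.
have Het : e <o t = 0 by apply: He.
by rewrite -(comp1m t) -H1 -Defs.compA Het compm0.
Qed.

(* The (X, Y[1])-decomposition of M splits once X -> M vanishes, so M is a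
   summand of an object of Y[1]. *)
Lemma shift_sub_of_orth (M : C) :
  (forall X0, X X0 -> forall t : Mor X0 M, t = 0) -> shift_sub Y M.
Proof.
case: XY => _ [HY [_ Hdec]] H.
have [X0 [Z [u [v [w [HX0 [HZ Hd]]]]]]] := Hdec M.
have Hb : is_biprod M (sh X0) Z.
  apply: dist_split (dist_rotate Hd) _.
  by rewrite (H _ HX0 u) shm0 oppr0.
exact: shift_sub_summand HY Hb HZ.
Qed.

Lemma cotorsion_right_orth (M : C) :
  (forall X0, X X0 -> Ext1_zero X0 M) -> Y M.
Proof.
move=> H; apply: shift_sub_shK; first by case: XY => _ [].
exact: shift_sub_of_orth.
Qed.

Lemma shift_sub_ext (A B D : C) (a : Mor A B) (b : Mor B D) (c : Mor D (sh A)) :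
  dist a b c -> shift_sub Y A -> shift_sub Y D -> shift_sub Y B.
Proof.
move=> Hd HA HD; apply: shift_sub_of_orth => X0 HX0 t.
have [g Hg] := dist_factor Hd (orth_shift_sub HX0 HD (b <o t)).
by rewrite -Hg (orth_shift_sub HX0 HA g) compm0.
Qed.

Lemma cone_comp_shift_sub (A B D E F G : C)
  (u : Mor A B) (j : Mor B E) (k : Mor E (sh A))
  (v : Mor B D) (l : Mor D F) (i : Mor F (sh B))
  (m : Mor D G) (n : Mor G (sh A)) :
  dist u j k -> dist v l i -> dist (v <o u) m n ->
  shift_sub Y E -> shift_sub Y F -> shift_sub Y G.
Proof.
move=> Hu Hv Hvu HE HF.
have [f [g [Hfg _ _ _ _]]] := dist_oct Hu Hv Hvu.
exact: shift_sub_ext Hfg HE HF.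
Qed.

End CotorsionPair.

Section TwinCotorsionPair.
Variables S T U V : C -> Prop.
Hypothesis STUV : twin_cotorsion_pair S T U V.

Let ST : cotorsion_pair S T. Proof. by case: STUV. Qed.
Let UV : cotorsion_pair U V. Proof. by case: STUV => _ []. Qed.
Let subcat_T : subcat T. Proof. by case: ST => _ []. Qed.

Lemma twin_V_sub_T (M : C) : V M -> T M.
Proof.
move=> HM; apply: (cotorsion_right_orth ST) => X0 HX0.
by case: STUV => _ [_ HSV]; apply: HSV.
Qed.

Lemma Cplus_of_T_cocone (A' A Y1 : C) (p : Mor A' A) (q : Mor A Y1)
  (r : Mor Y1 (sh A')) :
  dist p q r -> T A' -> shift_sub V Y1 -> Cplus T U V A.
Proof.
move=> Hpqr HA' HY1.
have [_ [_ [_ Hdec]]] := UV.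
have [U' [Q' [s [t [z [HU' [HQ' Hstz]]]]]]] := Hdec A'.
have HU'T : T U'.
  apply: (shift_sub_shK subcat_T).
  apply: (shift_sub_ext ST (dist_rotate (dist_rotate Hstz))).
    by case: HQ' => V' [HV' Hi]; exists V'; split => //; apply: twin_V_sub_T.
  exact: shift_sub_sh.
have [E [m [n Hmn]]] := dist_ex (p <o s).
exists U', E, (p <o s), m, n; do !split => //.
exact: (cone_comp_shift_sub UV Hstz Hpqr Hmn HQ' HY1).
Qed.

Lemma Cplus_cocone_T (Tt A B : C) (g : Mor Tt A) (f : Mor A B) (h : Mor B (sh Tt)) :
  dist g f h -> T Tt -> Cplus T U V B -> Cplus T U V A.
Proof.
move=> Hd HTt [W1 [Y1 [a [b [c [[HW1 _] [HY1 Habc]]]]]]].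
have [A' [p [q Hpq]]] := dist_ex_cocone (b <o f).
apply: (Cplus_of_T_cocone Hpq _ HY1).
apply: (shift_sub_shK subcat_T).
apply: (cone_comp_shift_sub ST (dist_rotate Hd)
  (dist_rotate Habc) (dist_rotate Hpq));
  exact: shift_sub_sh.
Qed.

Lemma Cplus_cone_V (Vv A B : C) (g : Mor Vv A) (f : Mor A B) (h : Mor B (sh Vv)) :
  dist g f h -> V Vv -> Cplus T U V A -> Cplus T U V B.
Proof.
move=> Hd HVv [W1 [Y1 [u [j [k [HW1 [HY1 Hujk]]]]]]].
have [E [m [n Hmn]]] := dist_ex (f <o u).
exists W1, E, (f <o u), m, n; do !split => //.
apply: (cone_comp_shift_sub UV Hujk (dist_rotate Hd) Hmn HY1).
exact: shift_sub_sh.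
Qed.

End TwinCotorsionPair.
End TriangLemmas.

Theorem lemma2p13 (C : Triang) (S T U V : C -> Prop) :
  twin_cotorsion_pair S T U V ->
  (forall (Tt A B : C) (g : Mor Tt A) (f : Mor A B) (h : Mor B (sh Tt)),
      dist g f h -> T Tt -> Cplus T U V B -> Cplus T U V A) /\
  (forall (Vv A B : C) (g : Mor Vv A) (f : Mor A B) (h : Mor B (sh Vv)),
      dist g f h -> V Vv -> Cplus T U V A -> Cplus T U V B).
Proof.
move=> STUV; split.
- exact: Cplus_cocone_T STUV.
- exact: Cplus_cone_V STUV.
Qed.
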